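(* Let $b,c_1,c_2$ be positive integers and let $\alpha/\beta$ be the right lobster $\mathcal{L}^{c_1,c_2}_b$, with $c_1$, $b$, $c_2$ cells in the top, middle and bottom rows respectively. Then the length of the longest chain in the poset $\mathrm{SET}(\alpha/\beta)$ is $$\mathrm{rank}(\mathrm{SET}(\alpha/\beta))=\begin{cases}c_2(b+c_1)-\binom{c_1+1}{2} & \text{if } c_1\le c_2,\\ bc_1+\binom{c_2}{2} & \text{if } c_1>c_2.\end{cases}$$
   Context: Rows are numbered from the bottom. The right lobster $\mathcal{L}^{c_1,c_2}_b$ is the skew diagram $\alpha/\beta$ with $\alpha=(b+1+c_2,b+1,b+1+c_1)$, $\beta=(b+1,1,b+1)$: a bottom row of $c_2$ cells in columns $b+2,\ldots,b+1+c_2$, a middle row of $b$ cells in columns $2,\ldots,b+1$, and a top row of $c_1$ cells in columns $b+2,\ldots,b+1+c_1$. $\mathrm{SET}(\alpha/\beta)$ is the set of bijective fillings with $1,\ldots,N$ ($N=b+c_1+c_2$) whose rows increase left to right and columns increase bottom to top. For $1\le i\le N-1$, $\pi_i(T)=T$ if $i+1$ is in a strictly higher row than $i$, $\pi_i(T)=s_i(T)$ (swap $i$ and $i+1$) if $i+1$ is in a strictly lower row than $i$, and $\pi_i(T)=0$ otherwise; the poset order is $T\le T'$ iff $T'$ is obtained from $T$ by a sequence of operators $\pi_i$ (all intermediate results nonzero). The length of a chain $x_0<x_1<\cdots<x_r$ is $r$. *)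

From mathcomp Require Import all_boot.
From Stdlib Require Import Relations.
Set Implicit Arguments. Unset Strict Implicit. Unset Printing Implicit Defensive.

(* A cell is a pair (row, column); rows are numbered from the bottom (row 1),
   columns from the left (column 1). *)
Definition cell := (nat * nat)%type.
Definition crow (x : cell) : nat := x.1.
Definition ccol (x : cell) : nat := x.2.

(* Cells of the right lobster L_b^{c1,c2} = alpha/beta with
   alpha = (b+1+c2, b+1, b+1+c1), beta = (b+1, 1, b+1). *)
Definition lobster_cell (b c1 c2 : nat) (x : cell) : bool :=
  let: (r, c) := x in
  [|| (r == 1) && (b + 2 <= c <= b + 1 + c2),
      (r == 2) && (2 <= c <= b + 1)
    | (r == 3) && (b + 2 <= c <= b + 1 + c1)].

Definition lobster_size (b c1 c2 : nat) : nat := b + c1 + c2.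

(* A filling with 1..N is encoded by the sequence s of cells of length N,
   where the entry k (1 <= k <= N) sits in cell  nth (0,0) s (k-1). *)
Definition cellof (s : seq cell) (k : nat) : cell := nth (0, 0) s k.-1.

Definition is_SET (b c1 c2 : nat) (s : seq cell) : Prop :=
  [/\ size s = lobster_size b c1 c2, uniq s, all (lobster_cell b c1 c2) s,
      (forall i j, 1 <= i -> i < j -> j <= size s ->
         crow (cellof s i) = crow (cellof s j) ->
         ccol (cellof s i) < ccol (cellof s j))
    &
      (forall i j, 1 <= i -> i < j -> j <= size s ->
         ccol (cellof s i) = ccol (cellof s j) ->
         crow (cellof s i) < crow (cellof s j))].

Definition swap_entries (s : seq cell) (i : nat) : seq cell :=
  [seq nth (0, 0) s (if j == i.-1 then i else if j == i then i.-1 else j)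
  | j <- iota 0 (size s)].

(* pi_i; None encodes the result 0. *)
Definition pi_op (s : seq cell) (i : nat) : option (seq cell) :=
  if crow (cellof s i) < crow (cellof s i.+1) then Some s
  else if crow (cellof s i.+1) < crow (cellof s i) then Some (swap_entries s i)
  else None.

Definition pi_step (s t : seq cell) : Prop :=
  exists i, 1 <= i /\ i <= (size s).-1 /\ pi_op s i = Some t.

Definition SET_le (s t : seq cell) : Prop := clos_refl_trans _ pi_step s t.
Definition SET_lt (s t : seq cell) : Prop := SET_le s t /\ s <> t.

Definition SET_chain (b c1 c2 : nat) (r : nat) (x : nat -> seq cell) : Prop :=
  (forall k, k <= r -> is_SET b c1 c2 (x k)) /\
  (forall k, k < r -> SET_lt (x k) (x k.+1)).

Definition longest_chain_length (b c1 c2 R : nat) : Prop :=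
  (exists x, SET_chain b c1 c2 R x) /\
  (forall r x, SET_chain b c1 c2 r x -> r <= R).

From mathcomp Require Import all_boot zify.
From Stdlib Require Import Relations.
Set Implicit Arguments. Unset Strict Implicit. Unset Printing Implicit Defensive.

(* The inversion number of the row word of T (the rows of the entries 1, ..., N,
   read in increasing order) ranks the poset: a pi_i that moves T swaps i and
   i+1 with i+1 in a lower row, removing exactly one inversion, and conversely
   every filling with an inversion has such a descent.  So the rank is the
   largest inversion number of a row word.  Since the top cell of each of the
   first min(c1,c2) right-hand columns sits above a bottom cell, every prefix of
   a row word satisfies a lattice condition, and a potential argument over
   prefixes bounds the inversions by b * max(c1,c2) + sum_(i < c2) min(i,c1).
   Filling the overlapping columns bottom/top alternately, and the middle row
   after every top cell but before the remaining bottom cells, attains it. *)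

(* [cell] is a transparent alias of [nat * nat] and [lia] compares atoms
   syntactically, so both spellings must be unified first. *)
Ltac cell_lia := unfold cell in *; lia.

Fixpoint inversions (w : seq nat) : nat :=
  if w is x :: w' then count (fun y => y < x) w' + inversions w' else 0.

Definition cross_inversions (a v : seq nat) : nat :=
  \sum_(x <- a) count (fun y => y < x) v.

Lemma inversions_cat a v :
  inversions (a ++ v) = inversions a + inversions v + cross_inversions a v.
Proof.
rewrite /cross_inversions; elim: a => [|x a IH] /=; first by rewrite big_nil addn0.
by rewrite big_cons count_cat IH; lia.
Qed.

Lemma cross_inversions_catl a a' v :
  cross_inversions (a ++ a') v = cross_inversions a v + cross_inversions a' v.
Proof. exact: big_cat. Qed.

Lemma cross_inversions_nseq n r v :
  cross_inversions (nseq n r) v = n * count (fun y => y < r) v.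
Proof. by rewrite /cross_inversions big_nseq iter_addn_0 mulnC. Qed.

Lemma inversions_nseq n r : inversions (nseq n r) = 0.
Proof. by elim: n => //= n ->; rewrite count_nseq ltnn. Qed.

Lemma inversions_rcons u x :
  inversions (rcons u x) = inversions u + count (fun y => x < y) u.
Proof. by elim: u => //= y u ->; rewrite -cats1 count_cat /=; lia. Qed.

Lemma inversions_swap a x y c : y < x ->
  inversions (a ++ x :: y :: c) = (inversions (a ++ y :: x :: c)).+1.
Proof.
move=> yx; rewrite !inversions_cat.
have -> : cross_inversions a (x :: y :: c) = cross_inversions a (y :: x :: c).
  by apply: eq_bigr => z _ /=; lia.
by rewrite /=; lia.
Qed.

Lemma inversions_descent w : 0 < inversions w ->
  exists2 i, i.+1 < size w & nth 0 w i.+1 < nth 0 w i.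
Proof.
elim: w => //= x w IH.
have [/IH [i lt_i desc_i] _|] := boolP (0 < inversions w); first by exists i.+1.
case: w IH => [|y w] _ /=; first by rewrite addn0.
rewrite lt0n negbK => /eqP /= inv0.
have [yx|xy] := ltnP y x; first by exists 0.
have le_cnt : count (fun z => z < x) w <= count (fun z => z < y) w.
  by apply: sub_count => z /=; lia.
by move=> /= pos; exfalso; lia.
Qed.

(* A named copy of [count_mem], so that every occurrence elaborates to the
   same term (the implicit carrier of [count_mem] depends on the context). *)
Definition letter_count (r : nat) (w : seq nat) : nat := count_mem r w.

Lemma letter_count_rcons r u x :
  letter_count r (rcons u x) = letter_count r u + (x == r).
Proof. by rewrite /letter_count -cats1 count_cat /= addn0 eq_sym. Qed.

Lemma count_gt_letters u : all (fun r => 0 < r <= 3) u ->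
  [/\ count (fun y => 1 < y) u = letter_count 2 u + letter_count 3 u,
      count (fun y => 2 < y) u = letter_count 3 u
    & count (fun y => 3 < y) u = 0].
Proof.
by rewrite /letter_count; elim: u => //= y u IH /andP [y_ok /IH [-> -> ->]]; split; lia.
Qed.

Definition admissible_prefix (c1 c2 : nat) (u : seq nat) : bool :=
  [&& letter_count 1 u <= c2, letter_count 3 u <= c1,
      minn (letter_count 3 u) c2 <= letter_count 1 u
    & all (fun r => 0 < r <= 3) u].

(* The correction term pays in advance for the inversions between the 2s read
   so far and the 1s still to come. *)
Lemma inversions_admissible c1 c2 w :
  (forall k, k <= size w -> admissible_prefix c1 c2 (take k w)) ->
  inversions w + letter_count 2 w * (c2 - letter_count 1 w)
    <= letter_count 2 w * maxn c1 c2 + \sum_(0 <= i < letter_count 1 w) minn i c1.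
Proof.
elim/last_ind: w => [|u x IH] adm; first by rewrite big_geq.
have adm_u k : k <= size u -> admissible_prefix c1 c2 (take k u).
  by move=> le_k; have := adm k; rewrite size_rcons -cats1 takel_cat //; apply; lia.
have := adm _ (leqnn _); rewrite take_size.
have := adm_u _ (leqnn _); rewrite take_size /admissible_prefix.
move=> /and4P [_ le3 lat letters].
have [gt1 gt2 gt3] := count_gt_letters letters.
have {}IH := IH adm_u.
rewrite inversions_rcons !letter_count_rcons all_rcons.
case/and4P => le1 _ _ /andP [x_ok _].
have [|[|]] : x = 1 \/ x = 2 \/ x = 3 by lia.
- move=> x1; subst x; rewrite gt1 /= !addn0 addn1 big_nat_recr //=.
  have n1_lt : letter_count 1 u < c2 by lia.
  by move: IH; rewrite -(subnSK n1_lt) mulnS; lia.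
- by move=> x2; subst x; rewrite gt2 /= !addn0 addn1 mulSn; lia.
- by move=> x3; subst x; rewrite gt3 /= !addn0.
Qed.

Lemma sum_minn c n : \sum_(0 <= i < n) minn i c =
  if c <= n then 'C(c, 2) + c * (n - c) else 'C(n, 2).
Proof.
case: leqP => [le_cn|lt_nc]; last first.
  by rewrite -bin2_sum; apply: eq_big_nat => i /andP [_ lt_in]; lia.
rewrite (big_cat_nat (leq0n c) le_cn) /= -bin2_sum mulnC -sum_nat_const_nat.
by congr (_ + _); apply: eq_big_nat => i /andP [le_i lt_i]; lia.
Qed.

Lemma sum_minn_mono c m n : m <= n ->
  \sum_(0 <= i < m) minn i c <= \sum_(0 <= i < n) minn i c.
Proof. by move=> le_mn; rewrite (big_cat_nat (leq0n m) le_mn) leq_addr. Qed.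

Lemma bin2_double n : 'C(n, 2) * 2 + n = n * n.
Proof. by elim: n => // n IH; rewrite binS bin1; nia. Qed.

Definition lobster_rank (b c1 c2 : nat) : nat :=
  b * maxn c1 c2 + \sum_(0 <= i < c2) minn i c1.

Lemma lobster_rankE b c1 c2 : lobster_rank b c1 c2 =
  if c1 <= c2 then c2 * (b + c1) - 'C(c1.+1, 2) else b * c1 + 'C(c2, 2).
Proof.
rewrite /lobster_rank sum_minn binS bin1.
by case: leqP => [le12|lt21]; have := bin2_double c1; nia.
Qed.

Definition std_before (x y : cell) : bool :=
  ((crow x == crow y) ==> (ccol x < ccol y)) &&
  ((ccol x == ccol y) ==> (crow x < crow y)).

Lemma std_before_irr : irreflexive std_before.
Proof. by move=> x; rewrite /std_before !eqxx !ltnn. Qed.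

Lemma is_SETP b c1 c2 s : is_SET b c1 c2 s <->
  [/\ size s = lobster_size b c1 c2, all (lobster_cell b c1 c2) s
    & pairwise std_before s].
Proof.
split=> [[size_s _ all_s rowP colP] | [size_s all_s /(pairwiseP ((0, 0) : cell)) std]].
  split=> //; apply/(pairwiseP ((0, 0) : cell)) => i j; rewrite !inE => lt_i lt_j lt_ij.
  by apply/andP; split; apply/implyP => /eqP E;
    [exact: (rowP i.+1 j.+1) | exact: (colP i.+1 j.+1)].
have std' i j : i < j -> j < size s -> std_before (cellof s i.+1) (cellof s j.+1).
  by move=> lt_ij lt_j; apply: (std i j); rewrite ?inE; lia.
split=> // [|[|i] [|j] // _ lt_ij lt_j E|[|i] [|j] // _ lt_ij lt_j E].
- by apply: (pairwise_uniq std_before_irr); apply/(pairwiseP ((0, 0) : cell)).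
- by have /andP [/implyP lt_col _] := std' i j lt_ij lt_j; apply/lt_col/eqP.
- by have /andP [_ /implyP lt_row] := std' i j lt_ij lt_j; apply/lt_row/eqP.
Qed.

Definition row_word (s : seq cell) : seq nat := map crow s.

Lemma take_nth2_drop (T : Type) (x0 : T) (s : seq T) k : k.+1 < size s ->
  s = take k s ++ nth x0 s k :: nth x0 s k.+1 :: drop k.+2 s.
Proof.
move=> lt_k; rewrite -{1}(cat_take_drop k s) (drop_nth x0); last by lia.
by rewrite (drop_nth x0 (n := k.+1)).
Qed.

Lemma pairwise_swap (T : Type) (r : rel T) a x y c :
  r y x -> pairwise r (a ++ x :: y :: c) -> pairwise r (a ++ y :: x :: c).
Proof.
move=> ryx; rewrite !pairwise_cat !allrel_consr /= ryx.
by case/and3P => /and3P [-> -> ->] -> /andP [/andP [_ ->] /andP [-> ->]].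
Qed.

Lemma swap_entriesE (s : seq cell) k : k.+1 < size s ->
  swap_entries s k.+1 =
  take k s ++ nth (0, 0) s k.+1 :: nth (0, 0) s k :: drop k.+2 s.
Proof.
move=> lt_k; have lt_k' : k < size s by lia.
apply: (@eq_from_nth _ (0, 0)).
  by rewrite size_map size_iota size_cat size_take lt_k' /= size_drop; cell_lia.
rewrite size_map size_iota => j lt_j.
rewrite (nth_map 0) ?size_iota // nth_iota // add0n /= nth_cat size_take lt_k'.
have [lt_jk|[->|[->|lt_kj]]] : j < k \/ j = k \/ j = k.+1 \/ k.+1 < j by lia.
- by rewrite lt_jk nth_take // ltn_eqF // ltn_eqF // ltnW.
- by rewrite eqxx ltnn subnn.
- by rewrite [k.+1 < k]ltnNge leqnSn gtn_eqF // eqxx subSnn.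
- have lt_kj' : k < j by exact: ltnW.
  rewrite gtn_eqF // gtn_eqF // ltnNge (ltnW lt_kj') /=.
  rewrite (_ : j - k = (j - k.+2).+2) /=; last by lia.
  by rewrite nth_drop; congr nth; lia.
Qed.

Section DescentSwap.

Variables (s : seq cell) (k : nat).
Hypotheses (lt_k : k.+1 < size s)
  (desc_k : crow (nth (0, 0) s k.+1) < crow (nth (0, 0) s k)).

Lemma swap_descent_SET b c1 c2 :
  is_SET b c1 c2 s -> is_SET b c1 c2 (swap_entries s k.+1).
Proof.
have swap_perm : perm_eq s (swap_entries s k.+1).
  rewrite swap_entriesE // {1}(take_nth2_drop (0, 0) lt_k) perm_cat2l.
  by apply/permP => p /=; rewrite addnCA.
case/is_SETP => size_s all_s std_s; apply/is_SETP; split.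
- by rewrite -(perm_size swap_perm).
- by rewrite -(perm_all _ swap_perm).
rewrite swap_entriesE //; apply: pairwise_swap; last by rewrite -take_nth2_drop.
by rewrite /std_before; cell_lia.
Qed.

Lemma inversions_swap_descent :
  (inversions (row_word (swap_entries s k.+1))).+1 = inversions (row_word s).
Proof.
rewrite swap_entriesE // [in RHS](take_nth2_drop (0, 0) lt_k) /row_word !map_cat.
by rewrite /= (inversions_swap _ _ desc_k).
Qed.

Lemma pi_op_descent : pi_op s k.+1 = Some (swap_entries s k.+1).
Proof. by rewrite /pi_op /cellof /= ltnNge (ltnW desc_k) desc_k. Qed.

End DescentSwap.

Lemma pi_step_inversions s t : pi_step s t ->
  t = s \/ inversions (row_word t) < inversions (row_word s).
Proof.
case=> [[|k] [//= _ [le_k]]]; rewrite /pi_op /cellof /=.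
case: ifP => [_ [<-]|_]; first by left.
case: ifP => // desc [<-]; right.
by rewrite -(inversions_swap_descent _ desc); lia.
Qed.

Lemma SET_le_inversions s t : SET_le s t ->
  t = s \/ inversions (row_word t) < inversions (row_word s).
Proof.
elim=> [x y /pi_step_inversions // | x | x y z _ IHxy _ IHyz]; first by left.
by case: IHxy IHyz => [->|lt_xy] [->|lt_yz]; auto; right; lia.
Qed.

Lemma SET_lt_inversions s t : SET_lt s t ->
  inversions (row_word t) < inversions (row_word s).
Proof. by case=> /SET_le_inversions [->|]. Qed.

Lemma SET_chain_inversions b c1 c2 r x : SET_chain b c1 c2 r x ->
  r + inversions (row_word (x r)) <= inversions (row_word (x 0)).
Proof.
case=> _ lt_x.
suff : forall k, k <= r -> k + inversions (row_word (x k)) <= inversions (row_word (x 0)).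
  by apply.
elim=> [//|k IH] lt_k; have := SET_lt_inversions (lt_x k lt_k).
by have := IH (ltnW lt_k); lia.
Qed.

Definition row_cells (r lo n : nat) : seq cell := [seq (r, c) | c <- iota lo n].

Lemma mem_row_cells r lo n x :
  (x \in row_cells r lo n) = (crow x == r) && (lo <= ccol x < lo + n).
Proof.
case: x => r' c; apply/mapP/andP => [[c' + [-> ->]] | [/eqP /= -> lt_c]].
  by rewrite mem_iota.
by exists c; rewrite ?mem_iota.
Qed.

Lemma size_row_cells r lo n : size (row_cells r lo n) = n.
Proof. by rewrite size_map size_iota. Qed.

Lemma uniq_row_cells r lo n : uniq (row_cells r lo n).
Proof. by rewrite map_inj_uniq ?iota_uniq // => c c' []. Qed.

Lemma pairwise_row_cells r lo n : pairwise std_before (row_cells r lo n).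
Proof.
have := iota_ltn_sorted lo n; rewrite pairwise_map (sorted_pairwise ltn_trans).
by apply: sub_pairwise => c c' lt_c; rewrite /std_before /crow /ccol /=; lia.
Qed.

Lemma row_word_row_cells r lo n : row_word (row_cells r lo n) = nseq n r.
Proof. by rewrite /row_word -map_comp; elim: n lo => //= n IH lo; rewrite IH. Qed.

Lemma letter_count_row_le r lo n (p : seq cell) : uniq p ->
  {in p, forall z, crow z = r -> lo <= ccol z < lo + n} ->
  letter_count r (row_word p) <= n.
Proof.
move=> uniq_p row_r; rewrite /letter_count count_map -size_filter.
rewrite -(size_row_cells r lo n) uniq_leq_size ?filter_uniq // => z.
by rewrite mem_filter mem_row_cells => /andP [/eqP zr zp]; rewrite zr eqxx row_r.
Qed.

Lemma letter_count_row_ge r lo n (p : seq cell) :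
  {subset row_cells r lo n <= p} -> n <= letter_count r (row_word p).
Proof.
move=> sub_p; rewrite /letter_count count_map -size_filter.
rewrite -[n](size_row_cells r lo) uniq_leq_size ?uniq_row_cells // => z z_r.
by rewrite mem_filter sub_p // andbT; move: z_r; rewrite mem_row_cells => /andP [].
Qed.

Lemma take_closed (T : eqType) (r : rel T) (s : seq T) k x y :
  pairwise r s -> x \in take k s -> y \in s -> ~~ r x y -> y \in take k s.
Proof.
move=> + xt + nrxy; rewrite -{1 2}(cat_take_drop k s) pairwise_cat mem_cat.
by case/and3P => /allrelP rel_td _ _ /orP [//|yd]; rewrite rel_td in nrxy.
Qed.

Fixpoint zigzag (lo n : nat) : seq cell :=
  if n is n'.+1 then zigzag lo n' ++ [:: (1, lo + n'); (3, lo + n')] else [::].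

Lemma size_zigzag lo n : size (zigzag lo n) = n + n.
Proof. by elim: n => //= n IH; rewrite size_cat IH /=; lia. Qed.

Lemma mem_zigzag lo n x : (x \in zigzag lo n) =
  ((crow x == 1) || (crow x == 3)) && (lo <= ccol x < lo + n).
Proof.
elim: n => [|n IH] /=; first by rewrite in_nil; apply/esym/negbTE; lia.
rewrite mem_cat IH !inE; case: x {IH} => r c; rewrite /crow /ccol /= !xpair_eqE.
by apply/idP/idP; lia.
Qed.

Lemma pairwise_zigzag lo n : pairwise std_before (zigzag lo n).
Proof.
elim: n => //= n IH; rewrite pairwise_cat IH /= !andbT /std_before /crow /ccol /=.
apply/andP; split; last by lia.
apply/allrelP => x y; rewrite mem_zigzag !inE /crow /ccol => + /orP [] /eqP -> /=; lia.
Qed.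

Lemma cross_inversions_zigzag lo n v : cross_inversions (row_word (zigzag lo n)) v =
  n * (count (fun y => y < 1) v + count (fun y => y < 3) v).
Proof.
elim: n => [|n IH]; first by rewrite /cross_inversions big_nil.
rewrite /row_word /= map_cat cross_inversions_catl -/(row_word _) IH.
by rewrite /cross_inversions !big_cons big_nil mulSn /crow /= addn0 addnC.
Qed.

Lemma inversions_zigzag lo n : inversions (row_word (zigzag lo n)) = 'C(n, 2).
Proof.
elim: n => //= n IH; rewrite /row_word map_cat inversions_cat -/(row_word _) IH.
by rewrite cross_inversions_zigzag /= binS bin1; lia.
Qed.

Section Lobster.

Variables b c1 c2 : nat.

Lemma lobster_cell_bounds z : lobster_cell b c1 c2 z ->
  [/\ 0 < crow z <= 3,
      crow z = 1 -> b + 2 <= ccol z < b + 2 + c2,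
      crow z = 2 -> 2 <= ccol z < 2 + b
    & crow z = 3 -> b + 2 <= ccol z < b + 2 + c1].
Proof. by case: z => r c; rewrite /crow /ccol /= => lob; split; lia. Qed.

Definition lobster_cells : seq cell :=
  row_cells 1 (b + 2) c2 ++ row_cells 2 2 b ++ row_cells 3 (b + 2) c1.

Lemma mem_lobster_cells x : (x \in lobster_cells) = lobster_cell b c1 c2 x.
Proof.
by case: x => r c; rewrite !mem_cat !mem_row_cells /crow /ccol /=; apply/idP/idP; lia.
Qed.

Lemma SET_mem s x : is_SET b c1 c2 s -> lobster_cell b c1 c2 x -> x \in s.
Proof.
case=> size_s uniq_s all_s _ _ lob_x.
have sub_s : {subset s <= lobster_cells}.
  by move=> y /(allP all_s); rewrite mem_lobster_cells.
have [|_ ->] := uniq_min_size uniq_s sub_s; last by rewrite mem_lobster_cells.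
by rewrite size_s !size_cat !size_row_cells /lobster_size; lia.
Qed.

Section Prefix.

Variables (s : seq cell) (k : nat).
Hypothesis SET_s : is_SET b c1 c2 s.

Local Notation p := (take k s).
Local Notation count_p r := (letter_count r (row_word p)).

Lemma lobster_cell_prefix z : z \in p -> lobster_cell b c1 c2 z.
Proof. by case: SET_s => _ _ /allP all_s _ _ /mem_take /all_s. Qed.

Lemma letter_count_prefix_le r lo n :
  {in p, forall z, lobster_cell b c1 c2 z -> crow z = r -> lo <= ccol z < lo + n} ->
  count_p r <= n.
Proof.
move=> bound; apply: (letter_count_row_le (lo := lo)) => [|z zp]; last first.
  exact/bound/lobster_cell_prefix.
by case: SET_s => _ uniq_s _ _ _; apply: take_uniq.
Qed.

Lemma prefix_top_row t : 0 < t <= count_p 3 -> (3, b + 1 + t) \in p.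
Proof.
case/is_SETP: (SET_s) => _ _ std_s /andP [t_pos le_t].
apply/negPn/negP => notin.
suff : count_p 3 <= t - 1 by lia.
apply: (letter_count_prefix_le (lo := b + 2)).
move=> z zp /lobster_cell_bounds [_ _ _ col_z] z3.
have [lt_col|le_col] := ltnP (ccol z) (b + 1 + t); first by have := col_z z3; lia.
case/negP: notin; apply: (take_closed std_s zp).
  apply: SET_mem => //=; have := col_z z3; lia.
by rewrite /std_before z3 /=; lia.
Qed.

Lemma prefix_lattice : minn (count_p 3) c2 <= count_p 1.
Proof.
case/is_SETP: (SET_s) => _ _ std_s.
apply: (letter_count_row_ge (lo := b + 2)) => -[r c].
rewrite mem_row_cells /crow /ccol /= => /andP [/eqP -> col_c].
have top : (3, c) \in p.
  by rewrite (_ : c = b + 1 + (c - b - 1)); [apply: prefix_top_row | ]; lia.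
apply: (take_closed std_s top); first by apply: SET_mem => //=; lia.
by rewrite /std_before /crow /ccol /=; lia.
Qed.

Lemma SET_admissible_prefix : admissible_prefix c1 c2 (take k (row_word s)).
Proof.
rewrite /row_word -map_take -/(row_word p); apply/and4P; split.
- by apply: (letter_count_prefix_le (lo := b + 2)) => z _ /lobster_cell_bounds [].
- by apply: (letter_count_prefix_le (lo := b + 2)) => z _ /lobster_cell_bounds [].
- exact: prefix_lattice.
- by rewrite all_map; apply/allP => z /lobster_cell_prefix /lobster_cell_bounds [].
Qed.

End Prefix.

Lemma SET_inversions_le s : is_SET b c1 c2 s ->
  inversions (row_word s) <= lobster_rank b c1 c2.
Proof.
move=> SET_s; have := inversions_admissible (fun k _ => SET_admissible_prefix k SET_s).
have /and4P [n1_le _ _ _] := SET_admissible_prefix (size (row_word s)) SET_s.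
have n2_le : letter_count 2 (row_word s) <= b.
  rewrite -[s]take_size; apply: (letter_count_prefix_le SET_s (lo := 2)).
  by move=> z _ /lobster_cell_bounds [].
rewrite take_size in n1_le.
have := sum_minn_mono c1 n1_le; have := leq_mul n2_le (leqnn (maxn c1 c2)).
rewrite /lobster_rank; nia.
Qed.

Definition max_SET : seq cell :=
  if c1 <= c2 then
    zigzag (b + 2) c1 ++ row_cells 2 2 b ++ row_cells 1 (b + 2 + c1) (c2 - c1)
  else
    zigzag (b + 2) c2 ++ row_cells 3 (b + 2 + c2) (c1 - c2) ++ row_cells 2 2 b.

Lemma max_SET_is_SET : is_SET b c1 c2 max_SET.
Proof.
apply/is_SETP; rewrite /max_SET; case: leqP => c12; split.
all: try by rewrite !size_cat size_zigzag !size_row_cells /lobster_size; lia.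
all: try by apply/allP => -[r c]; rewrite !mem_cat mem_zigzag !mem_row_cells /=; lia.
all: rewrite !pairwise_cat allrel_catr pairwise_zigzag !pairwise_row_cells /= !andbT.
all: by repeat (apply/andP; split); apply/allrelP => x y;
  rewrite ?mem_zigzag ?mem_row_cells /std_before; lia.
Qed.

Lemma max_SET_inversions : inversions (row_word max_SET) = lobster_rank b c1 c2.
Proof.
rewrite lobster_rankE /max_SET; case: leqP => c12; rewrite /row_word !map_cat.
all: rewrite -!/(row_word _) !row_word_row_cells !inversions_cat inversions_zigzag.
all: rewrite !inversions_nseq cross_inversions_zigzag !cross_inversions_nseq.
all: rewrite !count_cat !count_nseq /= ?binS ?bin1; have := bin2_double c1; nia.
Qed.

Lemma SET_descent_step s : is_SET b c1 c2 s -> 0 < inversions (row_word s) ->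
  exists2 t, is_SET b c1 c2 t /\ SET_lt s t
           & (inversions (row_word t)).+1 = inversions (row_word s).
Proof.
move=> SET_s /inversions_descent [k]; rewrite size_map => lt_k.
rewrite !(nth_map ((0, 0) : cell)) ?(ltnW lt_k) // => desc.
have inv_swap := inversions_swap_descent lt_k desc.
exists (swap_entries s k.+1) => //; split; first exact: swap_descent_SET.
split; last by move=> swap_id; rewrite -swap_id in inv_swap; lia.
by apply: rt_step; exists k.+1; split=> //; split; [lia | exact: pi_op_descent].
Qed.

Lemma SET_chain_from n s : is_SET b c1 c2 s -> n <= inversions (row_word s) ->
  exists x, SET_chain b c1 c2 n x /\ x 0 = s.
Proof.
elim: n s => [|n IH] s SET_s le_n; first by exists (fun=> s).
have [t [SET_t lt_st] inv_t] := SET_descent_step SET_s (leq_ltn_trans (leq0n n) le_n).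
have [x [[SET_x lt_x] x0]] : exists x, SET_chain b c1 c2 n x /\ x 0 = t.
  by apply: IH => //; lia.
exists (fun k => if k is k'.+1 then x k' else s); split=> //.
by split=> [[|k] le_k|[|k] lt_k] //=; [apply: SET_x | rewrite x0 | apply: lt_x].
Qed.

End Lobster.

Theorem corollary5p10 (b c1 c2 : nat) :
  0 < b -> 0 < c1 -> 0 < c2 ->
  longest_chain_length b c1 c2
    (if c1 <= c2 then c2 * (b + c1) - 'C(c1.+1, 2)
     else b * c1 + 'C(c2, 2)).
Proof.
(* The formula also holds when b, c1 or c2 vanishes. *)
move=> _ _ _; rewrite -lobster_rankE; split.
  have [x [chain _]] := SET_chain_from (max_SET_is_SET b c1 c2)
    (eq_leq (esym (max_SET_inversions b c1 c2))).
  by exists x.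
move=> r x chain; have := SET_chain_inversions chain.
have := SET_inversions_le (chain.1 0 (leq0n r)); lia.
Qed.
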